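(* The functor $\pi\colon\mathrm{EEED}\to\mathrm{ED}$ is essentially surjective and reflects isomorphisms. Moreover, for any $N,N'\in\mathrm{EEED}$ there is a natural short exact sequence \[ 0\to\mathrm{Hom}(\alpha(N)[2],\gamma(N')/2)\xrightarrow{\xi}\mathrm{EEED}(N,N')\xrightarrow{\pi}\mathrm{ED}(\pi(N),\pi(N'))\to 0. \] (In particular, $\pi$ is full.)
   Context: For an abelian group $U$, $U[2]=\{u:2u=0\}$ and $U/2=U/2U$. An extended $\eta$-diagram is a diagram of abelian groups $B\xrightarrow{\psi}A\xrightarrow{\eta}C\xrightarrow{\chi}B$ with $2\eta=0$, $\psi\chi=0$ and $\chi\eta\psi=2\cdot1_B$; write it $N=(A,B,C,\eta,\chi,\psi)$. A morphism $N\to N'$ is a triple $(f,g,h)$ with $f\colon A\to A'$, $g\colon B\to B'$, $h\colon C\to C'$, $f\psi=\psi'g$, $h\eta=\eta'f$, $g\chi=\chi'h$. One has $2\psi=0=2\chi$, so there are induced maps $C/2\xrightarrow{\chi}B\xrightarrow{\psi}A[2]$; $N$ is exact if this sequence is short exact. $\mathrm{EEED}$ is the category of exact extended $\eta$-diagrams. An $\eta$-diagram is a homomorphism $\eta\colon A\to C$ with $2\eta=0$; morphisms are pairs $(f,h)$ with $h\eta=\eta'f$; this category is $\mathrm{ED}$. The functor $\pi$ sends $N$ to $(A\xrightarrow{\eta}C)$ and $(f,g,h)$ to $(f,h)$; $\alpha(N)=A$, $\gamma(N)=C$. For $u\colon A[2]\to C'/2$, $\xi(u)$ is the morphism $(0,\bar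 u,0)\colon N\to N'$ where $\bar u$ is the composite $B\xrightarrow{\psi}A[2]\xrightarrow{u}C'/2\xrightarrow{\chi'}B'$. *)

(* Abelian groups are modelled as MathComp [zmodType]s,
   homomorphisms as functions together with a [zmod_morphism] proof. *)
From HB Require Import structures.
From mathcomp Require Import all_boot all_algebra.
From mathcomp Require Import boolp.

Set Implicit Arguments.
Unset Strict Implicit.
Unset Printing Implicit Defensive.

Import GRing.Theory.
Local Open Scope ring_scope.
Local Open Scope quotient_scope.

Lemma zmod_morph0 (U V : zmodType) (f : U -> V) :
  zmod_morphism f -> f 0 = 0.
Proof. by move=> hf; rewrite -(subrr (0 : U)) hf subrr. Qed.

Lemma zmod_morphN (U V : zmodType) (f : U -> V) :
  zmod_morphism f -> forall x, f (- x) = - f x.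
Proof. by move=> hf x; rewrite -sub0r hf zmod_morph0 // sub0r. Qed.

Lemma zmod_morphD (U V : zmodType) (f : U -> V) :
  zmod_morphism f -> forall x y, f (x + y) = f x + f y.
Proof.
move=> hf x y; have h : f (x - - y) = f x - f (- y) := hf x (- y).
by rewrite opprK in h; rewrite (zmod_morphN hf) opprK in h.
Qed.

Lemma zmod_morphMn (U V : zmodType) (f : U -> V) :
  zmod_morphism f -> forall x n, f (x *+ n) = f x *+ n.
Proof.
move=> hf x; elim=> [|n IH]; first by rewrite !mulr0n zmod_morph0.
by rewrite !mulrS zmod_morphD // IH.
Qed.

Lemma zmod_morphism_comp (U V W : zmodType) (g : V -> W) (f : U -> V) :
  zmod_morphism g -> zmod_morphism f -> zmod_morphism (g \o f).
Proof. by move=> hg hf x y /=; rewrite hf hg. Qed.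

Lemma zmod_morphism_id (U : zmodType) : zmod_morphism (@id U).
Proof. by []. Qed.

Lemma zmod_morphism_zero (U V : zmodType) : zmod_morphism (fun _ : U => 0 : V).
Proof. by move=> x y; rewrite subrr. Qed.

Lemma zmod_morphism_add (U V : zmodType) (f g : U -> V) :
  zmod_morphism f -> zmod_morphism g -> zmod_morphism (f \+ g).
Proof. by move=> hf hg x y /=; rewrite hf hg opprD addrACA. Qed.

Section Tors2.
Variable A : zmodType.

Definition is2tors : {pred A} := fun x => x *+ 2 == 0.

Fact is2tors_zmod_closed : zmod_closed is2tors.
Proof.
split=> [|x y]; rewrite /in_mem /= /is2tors; first by rewrite mul0rn.
by move=> /eqP hx /eqP hy; rewrite mulrnBl hx hy subrr.
Qed.

HB.instance Definition _ :=
  GRing.isZmodClosed.Build A is2tors is2tors_zmod_closed.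

Record tors2 := Tors2 { t2val :> A; t2P : t2val \in is2tors }.

HB.instance Definition _ := [isSub for t2val].
HB.instance Definition _ := [Choice of tors2 by <:].
HB.instance Definition _ := [SubChoice_isSubZmodule of tors2 by <:].

End Tors2.

Section Mod2.
Variable C : zmodType.

Definition mod2rel (x y : C) : bool := `[< exists z, x - y = z *+ 2 >].

Lemma mod2relP x y : reflect (exists z, x - y = z *+ 2) (mod2rel x y).
Proof. exact: asboolP. Qed.

Fact mod2rel_refl : reflexive mod2rel.
Proof. by move=> x; apply/mod2relP; exists 0; rewrite subrr mul0rn. Qed.

Fact mod2rel_sym : symmetric mod2rel.
Proof.
move=> x y; apply/mod2relP/mod2relP=> -[z h]; exists (- z);
  by rewrite mulNrn -h opprB.
Qed.

Fact mod2rel_trans : transitive mod2rel.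
Proof.
move=> y x z /mod2relP[a ha] /mod2relP[b hb]; apply/mod2relP; exists (a + b).
by rewrite mulrnDl -ha -hb addrA subrK.
Qed.

Canonical mod2rel_equiv :=
  EquivRel mod2rel mod2rel_refl mod2rel_sym mod2rel_trans.

Definition mod2 := {eq_quot mod2rel}.
HB.instance Definition _ := Choice.on mod2.
HB.instance Definition _ := Quotient.on mod2.

Lemma repr_pi2 (x : C) : mod2rel (repr (\pi_mod2 x)) x.
Proof. by apply/eqmodP; rewrite reprK. Qed.

Definition mod2_zero : mod2 := \pi_mod2 0.
Definition mod2_add (p q : mod2) : mod2 := \pi_mod2 (repr p + repr q).
Definition mod2_opp (p : mod2) : mod2 := \pi_mod2 (- repr p).

Lemma mod2_addpi x y : mod2_add (\pi_mod2 x) (\pi_mod2 y) = \pi_mod2 (x + y).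
Proof.
apply/eqmodP; have /mod2relP[a ha] := repr_pi2 x.
have /mod2relP[b hb] := repr_pi2 y; apply/mod2relP; exists (a + b).
by rewrite mulrnDl -ha -hb opprD addrACA.
Qed.

Lemma mod2_opppi x : mod2_opp (\pi_mod2 x) = \pi_mod2 (- x).
Proof.
apply/eqmodP; have /mod2relP[a ha] := repr_pi2 x; apply/mod2relP.
by exists (- a); rewrite mulNrn -ha opprK opprB addrC.
Qed.

Fact mod2_addA : associative mod2_add.
Proof.
move=> x y z; elim/(@quotW _ mod2): x => x; elim/(@quotW _ mod2): y => y; elim/(@quotW _ mod2): z => z.
by rewrite !mod2_addpi addrA.
Qed.

Fact mod2_addC : commutative mod2_add.
Proof.
move=> x y; elim/(@quotW _ mod2): x => x; elim/(@quotW _ mod2): y => y.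
by rewrite !mod2_addpi addrC.
Qed.

Fact mod2_add0 : left_id mod2_zero mod2_add.
Proof. by move=> x; elim/(@quotW _ mod2): x => x; rewrite /mod2_zero mod2_addpi add0r. Qed.

Fact mod2_addN : left_inverse mod2_zero mod2_opp mod2_add.
Proof. by move=> x; elim/(@quotW _ mod2): x => x; rewrite mod2_opppi mod2_addpi addNr. Qed.

HB.instance Definition _ :=
  GRing.isZmodule.Build mod2 mod2_addA mod2_addC mod2_add0 mod2_addN.

End Mod2.

Section Induced.
Variables (U V : zmodType) (f : U -> V) (hf : zmod_morphism f).

Fact tors2map_subproof (a : tors2 U) : f (t2val a) \in @is2tors V.
Proof.
have /eqP h := t2P a; apply/eqP.
by rewrite -zmod_morphMn // h zmod_morph0.
Qed.

Definition tors2map (a : tors2 U) : tors2 V := Tors2 (tors2map_subproof a).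

End Induced.

Definition mod2map (U V : zmodType) (f : U -> V) (q : mod2 U) : mod2 V :=
  \pi_(mod2 V) (f (repr q)).

(* Extended eta-diagrams  B --psi--> A --eta--> C --chi--> B           *)

Record xdiag := XDiag {
  xA : zmodType; xB : zmodType; xC : zmodType;
  xeta : xA -> xC; xchi : xC -> xB; xpsi : xB -> xA;
  xeta_add : zmod_morphism xeta;
  xchi_add : zmod_morphism xchi;
  xpsi_add : zmod_morphism xpsi;
  xeta2 : forall a, xeta a *+ 2 = 0;
  xpsichi : forall c, xpsi (xchi c) = 0;
  xchietapsi : forall b, xchi (xeta (xpsi b)) = b *+ 2
}.

Arguments xeta : clear implicits.
Arguments xchi : clear implicits.
Arguments xpsi : clear implicits.
Arguments xeta_add : clear implicits.
Arguments xchi_add : clear implicits.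
Arguments xpsi_add : clear implicits.

Lemma xpsi2 (N : xdiag) (b : xB N) : xpsi N b *+ 2 = 0.
Proof.
by rewrite -(zmod_morphMn (xpsi_add N)) -xchietapsi xpsichi.
Qed.

Lemma xchi2 (N : xdiag) (c : xC N) : xchi N c *+ 2 = 0.
Proof.
by rewrite -xchietapsi xpsichi (zmod_morph0 (xeta_add N)) (zmod_morph0 (xchi_add N)).
Qed.

Definition psibar (N : xdiag) (b : xB N) : tors2 (xA N) :=
  @Tors2 _ (xpsi N b) (introT eqP (xpsi2 b) : xpsi N b \in @is2tors _).

Definition chibar (N : xdiag) (q : mod2 (xC N)) : xB N := xchi N (repr q).

Arguments chibar : clear implicits.

Definition xexact (N : xdiag) : Prop :=
  [/\ injective (chibar N),
      (forall b : xB N, psibar b = 0 <-> exists q, chibar N q = b)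
    & forall a : tors2 (xA N), exists b, psibar b = a].

Record ediag := EDiag {
  eA : zmodType; eC : zmodType;
  eeta : eA -> eC;
  eeta_add : zmod_morphism eeta;
  eeta2 : forall a, eeta a *+ 2 = 0
}.

Arguments eeta : clear implicits.
Arguments eeta_add : clear implicits.

Record xmor (N N' : xdiag) := XMor {
  mf : xA N -> xA N'; mg : xB N -> xB N'; mh : xC N -> xC N';
  mf_add : zmod_morphism mf;
  mg_add : zmod_morphism mg;
  mh_add : zmod_morphism mh;
  mfpsi : forall b, mf (xpsi N b) = xpsi N' (mg b);
  mheta : forall a, mh (xeta N a) = xeta N' (mf a);
  mgchi : forall c, mg (xchi N c) = xchi N' (mh c)
}.

Record emor (D D' : ediag) := EMor {
  ef : eA D -> eA D'; eh : eC D -> eC D';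
  ef_add : zmod_morphism ef;
  eh_add : zmod_morphism eh;
  eheta : forall a, eh (eeta D a) = eeta D' (ef a)
}.

Definition xmor_eq N N' (p q : xmor N N') : Prop :=
  [/\ forall a, mf p a = mf q a, forall b, mg p b = mg q b
    & forall c, mh p c = mh q c].
Definition emor_eq D D' (p q : emor D D') : Prop :=
  (forall a, ef p a = ef q a) /\ (forall c, eh p c = eh q c).

Definition xid (N : xdiag) : xmor N N :=
  @XMor N N id id id (@zmod_morphism_id _) (@zmod_morphism_id _)
    (@zmod_morphism_id _) (fun _ => erefl) (fun _ => erefl) (fun _ => erefl).

Section XComp.
Variables (N1 N2 N3 : xdiag) (q : xmor N2 N3) (p : xmor N1 N2).
Fact xcomp_psi b : (mf q \o mf p) (xpsi N1 b) = xpsi N3 ((mg q \o mg p) b).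
Proof. by rewrite /= mfpsi mfpsi. Qed.
Fact xcomp_eta a : (mh q \o mh p) (xeta N1 a) = xeta N3 ((mf q \o mf p) a).
Proof. by rewrite /= mheta mheta. Qed.
Fact xcomp_chi c : (mg q \o mg p) (xchi N1 c) = xchi N3 ((mh q \o mh p) c).
Proof. by rewrite /= mgchi mgchi. Qed.
Definition xcomp : xmor N1 N3 :=
  XMor (zmod_morphism_comp (mf_add q) (mf_add p))
       (zmod_morphism_comp (mg_add q) (mg_add p))
       (zmod_morphism_comp (mh_add q) (mh_add p))
       xcomp_psi xcomp_eta xcomp_chi.
End XComp.

Definition eid (D : ediag) : emor D D :=
  @EMor D D id id (@zmod_morphism_id _) (@zmod_morphism_id _) (fun _ => erefl).

Section EComp.
Variables (D1 D2 D3 : ediag) (q : emor D2 D3) (p : emor D1 D2).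
Fact ecomp_eta a : (eh q \o eh p) (eeta D1 a) = eeta D3 ((ef q \o ef p) a).
Proof. by rewrite /= eheta eheta. Qed.
Definition ecomp : emor D1 D3 :=
  EMor (zmod_morphism_comp (ef_add q) (ef_add p))
       (zmod_morphism_comp (eh_add q) (eh_add p)) ecomp_eta.
End EComp.

Definition xiso N N' (p : xmor N N') : Prop :=
  exists q : xmor N' N, xmor_eq (xcomp q p) (xid N) /\ xmor_eq (xcomp p q) (xid N').
Definition eiso D D' (p : emor D D') : Prop :=
  exists q : emor D' D, emor_eq (ecomp q p) (eid D) /\ emor_eq (ecomp p q) (eid D').

Section XAdd.
Variables (N N' : xdiag) (p q : xmor N N').
Fact xadd_psi b : (mf p \+ mf q) (xpsi N b) = xpsi N' ((mg p \+ mg q) b).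
Proof. by rewrite /= !mfpsi (zmod_morphD (xpsi_add N')). Qed.
Fact xadd_eta a : (mh p \+ mh q) (xeta N a) = xeta N' ((mf p \+ mf q) a).
Proof. by rewrite /= !mheta (zmod_morphD (xeta_add N')). Qed.
Fact xadd_chi c : (mg p \+ mg q) (xchi N c) = xchi N' ((mh p \+ mh q) c).
Proof. by rewrite /= !mgchi (zmod_morphD (xchi_add N')). Qed.
Definition xadd : xmor N N' :=
  XMor (zmod_morphism_add (mf_add p) (mf_add q))
       (zmod_morphism_add (mg_add p) (mg_add q))
       (zmod_morphism_add (mh_add p) (mh_add q))
       xadd_psi xadd_eta xadd_chi.
End XAdd.

Section EAdd.
Variables (D D' : ediag) (p q : emor D D').
Fact eadd_eta a : (eh p \+ eh q) (eeta D a) = eeta D' ((ef p \+ ef q) a).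
Proof. by rewrite /= !eheta (zmod_morphD (eeta_add D')). Qed.
Definition eadd : emor D D' :=
  EMor (zmod_morphism_add (ef_add p) (ef_add q))
       (zmod_morphism_add (eh_add p) (eh_add q)) eadd_eta.
End EAdd.

Definition piD (N : xdiag) : ediag := EDiag (xeta_add N) (@xeta2 N).
Definition piM N N' (p : xmor N N') : emor (piD N) (piD N') :=
  @EMor (piD N) (piD N') (mf p) (mh p) (mf_add p) (mh_add p) (mheta p).

Definition alpha (N : xdiag) := xA N.
Definition gamma (N : xdiag) := xC N.

Lemma mod2_piB (C : zmodType) (x y : C) :
  \pi_(mod2 C) (x - y) = \pi_(mod2 C) x - \pi_(mod2 C) y.
Proof.
have -> : \pi_(mod2 C) x - \pi_(mod2 C) y
        = mod2_add (\pi_(mod2 C) x) (mod2_opp (\pi_(mod2 C) y)) by [].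
by rewrite mod2_opppi mod2_addpi.
Qed.

Lemma mod2map_pi (U V : zmodType) (f : U -> V) (hf : zmod_morphism f) x :
  mod2map f (\pi_(mod2 U) x) = \pi_(mod2 V) (f x).
Proof.
apply/eqmodP; have /mod2relP[a ha] := repr_pi2 x; apply/mod2relP.
by exists (f a); rewrite -hf ha (zmod_morphMn hf).
Qed.

Lemma mod2map_add (U V : zmodType) (f : U -> V) :
  zmod_morphism f -> zmod_morphism (mod2map f).
Proof.
move=> hf p q; elim/(@quotW _ (mod2 U)): p => x; elim/(@quotW _ (mod2 U)): q => y.
by rewrite -mod2_piB !(mod2map_pi hf) hf mod2_piB.
Qed.

Lemma tors2map_add (U V : zmodType) (f : U -> V) (hf : zmod_morphism f) :
  zmod_morphism (tors2map hf).
Proof. by move=> a b; apply: val_inj; rewrite /= hf. Qed.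

Lemma psibar_add (N : xdiag) : zmod_morphism (@psibar N).
Proof. by move=> a b; apply: val_inj; rewrite /= (xpsi_add N). Qed.

Lemma chibar_pi (N : xdiag) (x : xC N) : chibar N (\pi_(mod2 (xC N)) x) = xchi N x.
Proof.
have /mod2relP[a ha] := repr_pi2 x; apply/eqP; rewrite -subr_eq0.
by rewrite /chibar -(xchi_add N) ha (zmod_morphMn (xchi_add N)) xchi2.
Qed.

Lemma chibar_add (N : xdiag) : zmod_morphism (@chibar N).
Proof.
move=> p q; elim/(@quotW _ (mod2 (xC N))): p => x.
elim/(@quotW _ (mod2 (xC N))): q => y.
by rewrite -mod2_piB !chibar_pi (xchi_add N).
Qed.

Section Xi.
Variables (N N' : xdiag) (u : tors2 (alpha N) -> mod2 (gamma N'))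
          (hu : zmod_morphism u).

Definition xi_g (b : xB N) : xB N' := chibar N' (u (psibar b)).

Fact xi_g_add : zmod_morphism xi_g.
Proof.
by move=> a b; rewrite /xi_g (@psibar_add N) hu (@chibar_add N').
Qed.

Fact xi_psi b : (fun _ : xA N => 0 : xA N') (xpsi N b) = xpsi N' (xi_g b).
Proof. by rewrite /xi_g /chibar xpsichi. Qed.

Fact xi_eta a : (fun _ : xC N => 0 : xC N') (xeta N a)
              = xeta N' ((fun _ : xA N => 0 : xA N') a).
Proof. by rewrite (zmod_morph0 (xeta_add N')). Qed.

Fact xi_chi c : xi_g (xchi N c) = xchi N' ((fun _ : xC N => 0 : xC N') c).
Proof.
rewrite /xi_g.
have -> : psibar (xchi N c) = 0 by apply: val_inj; rewrite /= xpsichi.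
by rewrite (zmod_morph0 hu) (zmod_morph0 (@chibar_add N'))
  (zmod_morph0 (xchi_add N')).
Qed.

Definition xi : xmor N N' :=
  XMor (@zmod_morphism_zero (xA N) (xA N')) xi_g_add
       (@zmod_morphism_zero (xC N) (xC N')) xi_psi xi_eta xi_chi.

End Xi.

(* Fullness and essential surjectivity both rest on one extension principle:
   a homomorphism defined on a subgroup S of G extends, by Zorn's lemma, to
   every x with 2x in S, as long as some y with 2y equal to the value at 2x
   is available.  For a morphism (f, h) of eta-diagrams the middle map g is
   forced on chi(C), and since 2b = chi (eta (psi b)) the forced value at 2b
   is 2b' for any b' with psi' b' = f (psi b).  For essential surjectivity B
   is the quotient of C x F, with F free abelian on A[2], by the pairs (c, w)
   with w in the kernel of F -> A[2] and c = theta w mod 2, where theta extends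
   2w |-> eta(w) mod 2 to that kernel.  Reflection of isomorphisms is the five
   lemma, and a morphism (0, g, 0) kills chi(C) and lands in ker psi', hence
   factors as B -> A[2] -> C'/2 -> B'. *)

From HB Require Import structures.
From mathcomp Require Import all_boot all_algebra.
From mathcomp Require Import boolp ring_quotient freeg.
From mathcomp Require classical_sets.

Set Implicit Arguments.
Unset Strict Implicit.
Unset Printing Implicit Defensive.

Import GRing.Theory Num.Theory.
Local Open Scope ring_scope.
Local Open Scope quotient_scope.

Section LiftExtension.
Import classical_sets.
Local Open Scope classical_set_scope.

Variables (G H K : zmodType) (phi : G -> K) (phi' : H -> K).
Hypotheses (phi_add : zmod_morphism phi) (phi'_add : zmod_morphism phi').

Definition lift_graph (R : set (G * H)) : Prop :=
  [/\ forall x y y', R (x, y) -> R (x, y') -> y = y',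
      forall z w, R z -> R w -> R (z - w)
    & forall z, R z -> phi' z.2 = phi z.1].

Variable R0 : set (G * H).
Hypothesis R0_lift : lift_graph R0.

Lemma lift_graph_chain (F : set (set (G * H))) :
  F `<=` (fun X => lift_graph (X `|` R0)) -> total_on F subset ->
  lift_graph (\bigcup_(X in F) X `|` R0).
Proof.
move=> FP Ftot; set U := _ `|` R0.
have sub X : F X -> X `|` R0 `<=` U by move=> FX z [Xz|R0z]; [left; exists X|right].
have common z w : U z -> U w ->
    exists Y, [/\ lift_graph Y, Y z, Y w & Y `<=` U].
  case=> [[X1 FX1 X1z]|R0z] [[X2 FX2 X2w]|R0w].
  - have [X1X2|X2X1] := Ftot _ _ FX1 FX2.
    + by exists (X2 `|` R0); split; [exact: FP|left; exact: X1X2|left|exact: sub].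
    + by exists (X1 `|` R0); split; [exact: FP|left|left; exact: X2X1|exact: sub].
  - by exists (X1 `|` R0); split; [exact: FP|left|right|exact: sub].
  - by exists (X2 `|` R0); split; [exact: FP|right|left|exact: sub].
  - by exists R0; split => // z' R0z'; right.
split.
- move=> x y y' Uxy Uxy'; have [Y [[Yfun _ _] Yxy Yxy' _]] := common _ _ Uxy Uxy'.
  exact: Yfun Yxy Yxy'.
- move=> z w Uz Uw; have [Y [[_ YB _] Yz Yw YU]] := common _ _ Uz Uw.
  exact/YU/YB.
- move=> z Uz; have [Y [[_ _ Yphi] Yz _ _]] := common _ _ Uz Uz.
  exact: Yphi.
Qed.

(* Adjoining [x] with value [y] keeps the graph closed under subtraction
   because [2x] already has the value [2y]. *)
Lemma lift_graph_adjoin (R : set (G * H)) (x : G) (y : H) :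
  lift_graph R -> R (x *+ 2, y *+ 2) -> phi' y = phi x ->
  ~ (exists y', R (x, y')) -> lift_graph (fun z => R z \/ R (z - (x, y))).
Proof.
move=> [Rfun RB Rphi] R2 phiy nodom; split.
- have dom z w : R z -> R (w - (x, y)) -> z.1 = w.1 -> False.
    move=> Rz Sw e1; apply: nodom; exists (z - (w - (x, y))).2.
    by move: (RB _ _ Rz Sw); congr R; apply: injective_projections; rewrite //= e1 subKr.
  move=> x0 y0 y0' [R1|S1] [R2'|S2].
  + exact: Rfun R1 R2'.
  + by case: (dom _ _ R1 S2).
  + by case: (dom _ _ R2' S1).
  + by apply: (addIr (- y)); exact: Rfun S1 S2.
- move=> z w [Rz|Sz] [Rw|Sw].
  + by left; apply: RB.
  + right; move: (RB _ _ (RB _ _ Rz Sw) R2); congr R.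
    by rewrite -[(x *+ 2, _)]/((x, y) *+ 2) mulr2n opprB opprD !addrA (addrAC z) addrK.
  + by right; rewrite addrAC; apply: RB.
  + by left; move: (RB _ _ Sz Sw); rewrite opprB addrA subrK.
- move=> z [Rz|Sz]; first exact: Rphi.
  by move: (Rphi _ Sz); rewrite /= phi'_add phi_add phiy => /addIr.
Qed.

Variable T : set G.
Hypothesis halves :
  forall x, T x -> exists y, phi' y = phi x /\ R0 (x *+ 2, y *+ 2).

Lemma lift_extension : exists t : G -> H,
  [/\ forall x x', T x -> T x' -> t (x - x') = t x - t x',
      forall x y, R0 (x, y) -> t x = y
    & forall x, T x -> phi' (t x) = phi x].
Proof.
have [A [Alift Amax]] := Zorn_bigcup lift_graph_chain.
set R := A `|` R0; have [Rfun RB Rphi] := Alift.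
have RT x : T x -> exists y, R (x, y).
  move=> Tx; apply: contrapT => nodom.
  have [y [phiy R0x2]] := halves Tx; have Rx2 : R (x *+ 2, y *+ 2) by right.
  set R' := fun z => R z \/ R (z - (x, y)).
  have R'lift : lift_graph (R' `|` R0).
    rewrite setUidl; last by move=> z R0z; left; right.
    exact: lift_graph_adjoin Alift Rx2 phiy nodom.
  have [R'A|] := pselect (R' `<=` A).
    apply: nodom; exists y; left; apply: R'A; right.
    by rewrite subrr; have := RB _ _ Rx2 Rx2; rewrite subrr.
  by move=> nR'A; apply: (Amax R') => //; split=> // z Az; left; left.
have /choice[t tR] : forall x, exists y, (exists y', R (x, y')) -> R (x, y).
  move=> x; have [[y Rxy]|nodom] := pselect (exists y, R (x, y)).
    by exists y.
  by exists 0 => /nodom.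
have RtT x : T x -> R (x, t x) by move/RT/tR.
exists t; split.
- move=> x x' Tx Tx'; have Rdiff := RB _ _ (RtT _ Tx) (RtT _ Tx').
  by apply: (Rfun (x - x')) => //; apply: tR; exists (t x - t x').
- by move=> x y R0xy; apply: (Rfun x) (tR _ _) _; [exists y|]; right.
- by move=> x Tx; exact: Rphi (RtT _ Tx).
Qed.
End LiftExtension.

Lemma zmod_morph_inj (U V : zmodType) (f : U -> V) :
  zmod_morphism f -> (forall x, f x = 0 -> x = 0) -> injective f.
Proof. by move=> hf ker0 x y fxy; apply/subr0_eq/ker0; rewrite hf fxy subrr. Qed.

Lemma mod2_pi_eq (C : zmodType) (x y : C) :
  \pi_(mod2 C) x = \pi_(mod2 C) y <-> exists z, x - y = z *+ 2.
Proof. by split=> [/eqmodP/mod2relP|/mod2relP/eqmodP]. Qed.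

Lemma mod2_pi_double (C : zmodType) (x : C) : \pi_(mod2 C) (x *+ 2) = 0.
Proof. by apply/mod2_pi_eq; exists x; rewrite subr0. Qed.

Lemma mod2_piN (C : zmodType) (x : C) : \pi_(mod2 C) (- x) = \pi_(mod2 C) x.
Proof. by apply/mod2_pi_eq; exists (- x); rewrite mulr2n. Qed.

Lemma mod2N (C : zmodType) (q : mod2 C) : - q = q.
Proof.
elim/(@quotW _ (mod2 C)): q => x.
by rewrite -[- _]sub0r -[0]/(\pi_(mod2 C) 0) -mod2_piB sub0r mod2_piN.
Qed.

Lemma tors2_double (A : zmodType) (v : tors2 A) : v *+ 2 = 0.
Proof. by apply: val_inj; rewrite raddfMn; apply/eqP; exact: t2P. Qed.

Lemma xchi_double (N : xdiag) (c : xC N) : xchi N (c *+ 2) = 0.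
Proof. by rewrite (zmod_morphMn (xchi_add N)) xchi2. Qed.

Section ExactDiagram.
Variables (N : xdiag) (Nex : xexact N).

Lemma xexact_chi0 c : xchi N c = 0 -> exists d, c = d *+ 2.
Proof.
case: Nex => chi_inj _ _ chic0.
have : chibar N (\pi_(mod2 (xC N)) c) = chibar N 0.
  by rewrite chibar_pi chic0 (zmod_morph0 (@chibar_add N)).
by move/chi_inj/mod2_pi_eq => [d]; rewrite subr0; exists d.
Qed.

Lemma xexact_psi0 b : xpsi N b = 0 -> exists c, b = xchi N c.
Proof.
case: Nex => _ ker_psi _ psib0.
have /ker_psi[q <-] : psibar b = 0 by apply: val_inj.
by exists (repr q).
Qed.

Lemma xexact_psi_onto a : a *+ 2 = 0 -> exists b, xpsi N b = a.
Proof.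
case: Nex => _ _ psi_onto a2; have [b psib] := psi_onto (Tors2 (introT eqP a2)).
by exists b; rewrite -[xpsi N b]/(t2val (psibar b)) psib.
Qed.

End ExactDiagram.

Section IsoReflection.
Variables (N N' : xdiag) (Nex : xexact N) (N'ex : xexact N').
Variables (p : xmor N N') (q : emor (piD N') (piD N)).
Hypotheses (qfK : cancel (mf p) (ef q)) (qhK : cancel (mh p) (eh q)).
Hypotheses (fqK : cancel (ef q) (mf p)) (hqK : cancel (eh q) (mh p)).

Lemma mg_inj : injective (mg p).
Proof.
apply: (zmod_morph_inj (mg_add p)) => b gb0.
have /(xexact_psi0 Nex)[c bc] : xpsi N b = 0.
  by rewrite -[xpsi N b]qfK mfpsi gb0 (zmod_morph0 (xpsi_add N')) (zmod_morph0 (ef_add q)).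
move: gb0; rewrite bc mgchi => /(xexact_chi0 N'ex)[d hcd].
by rewrite -[c]qhK hcd (zmod_morphMn (eh_add q)) xchi_double.
Qed.

Lemma mg_surj b' : exists b, mg p b = b'.
Proof.
have [b psib] : exists b, xpsi N b = ef q (xpsi N' b').
  apply: (xexact_psi_onto Nex).
  by rewrite -(zmod_morphMn (ef_add q)) xpsi2 (zmod_morph0 (ef_add q)).
have /(xexact_psi0 N'ex)[c' hc'] : xpsi N' (b' - mg p b) = 0.
  by rewrite (xpsi_add N') -mfpsi psib fqK subrr.
exists (b + xchi N (eh q c')).
by rewrite (zmod_morphD (mg_add p)) mgchi hqK -hc' addrC subrK.
Qed.

Lemma xiso_of_piM_inverse : xiso p.
Proof.
have /choice[g' gK] := mg_surj.
have g'_add : zmod_morphism g' by move=> x y; apply: mg_inj; rewrite (mg_add p) !gK.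
have g'psi b' : ef q (xpsi N' b') = xpsi N (g' b').
  by apply: (can_inj qfK); rewrite fqK mfpsi gK.
have g'chi c' : g' (xchi N' c') = xchi N (eh q c').
  by apply: mg_inj; rewrite gK mgchi hqK.
exists (XMor (ef_add q) g'_add (eh_add q) g'psi (eheta q) g'chi).
by split; split=> //= x; apply: mg_inj; rewrite gK.
Qed.

End IsoReflection.

Lemma piM_reflect_iso (N N' : xdiag) : xexact N -> xexact N' ->
  forall p : xmor N N', eiso (piM p) -> xiso p.
Proof.
move=> Nex N'ex p [q [[qfK qhK] [fqK hqK]]].
exact: (xiso_of_piM_inverse (q := q) Nex N'ex qfK qhK fqK hqK).
Qed.

Section Fullness.
Variables (N N' : xdiag) (Nex : xexact N) (N'ex : xexact N').
Variable q : emor (piD N) (piD N').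

Definition chi_graph (z : xB N * xB N') : Prop :=
  exists c, z = (xchi N c, xchi N' (eh q c)).

Lemma chi_graph_lift :
  lift_graph (fun b => ef q (xpsi N b)) (xpsi N') chi_graph.
Proof.
split.
- move=> _ _ _ [c1 [-> ->]] [c2 [e ->]].
  apply/subr0_eq; rewrite -(xchi_add N') -(eh_add q).
  have /(xexact_chi0 Nex)[d ->] : xchi N (c1 - c2) = 0 by rewrite (xchi_add N) e subrr.
  by rewrite (zmod_morphMn (eh_add q)) xchi_double.
- move=> _ _ [c1 ->] [c2 ->]; exists (c1 - c2).
  by rewrite (xchi_add N) (eh_add q) (xchi_add N').
- move=> _ [c ->] /=.
  by rewrite !xpsichi (zmod_morph0 (ef_add q)).
Qed.

(* [2b = chi (eta (psi b))], so the value forced at [2b] is [chi' (eta' (f (psi b)))]. *)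
Lemma chi_graph_halves b : exists b',
  xpsi N' b' = ef q (xpsi N b) /\ chi_graph (b *+ 2, b' *+ 2).
Proof.
have [b' psib'] : exists b', xpsi N' b' = ef q (xpsi N b).
  apply: (xexact_psi_onto N'ex).
  by rewrite -(zmod_morphMn (ef_add q)) xpsi2 (zmod_morph0 (ef_add q)).
exists b'; split=> //; exists (xeta N (xpsi N b)).
by rewrite xchietapsi (eheta q) /= -psib' xchietapsi.
Qed.

Lemma piM_full : exists p : xmor N N', emor_eq (piM p) q.
Proof.
have fpsi_add : zmod_morphism (fun b => ef q (xpsi N b)).
  exact: zmod_morphism_comp (ef_add q) (xpsi_add N).
have [g [gB gchi gpsi]] := lift_extension fpsi_add (xpsi_add N') chi_graph_lift
  (T := fun _ => True) (fun b _ => chi_graph_halves b).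
have g_add : zmod_morphism g by move=> x y; apply: gB.
have gpsi' b : ef q (xpsi N b) = xpsi N' (g b) by rewrite gpsi.
have gchi' c : g (xchi N c) = xchi N' (eh q c) by apply: gchi; exists c.
by exists (XMor (ef_add q) g_add (eh_add q) gpsi' (eheta q) gchi').
Qed.

End Fullness.

Section XiSequence.
Variables (N N' : xdiag) (Nex : xexact N) (N'ex : xexact N').
Implicit Types u v : tors2 (alpha N) -> mod2 (gamma N').

Lemma xiD u v (hu : zmod_morphism u) (hv : zmod_morphism v) :
  xmor_eq (xi (zmod_morphism_add hu hv)) (xadd (xi hu) (xi hv)).
Proof.
split=> x /=; rewrite ?addr0 //.
by rewrite /xi_g (zmod_morphD (@chibar_add N')).
Qed.

Lemma xi_inj u v (hu : zmod_morphism u) (hv : zmod_morphism v) :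
  xmor_eq (xi hu) (xi hv) -> forall a, u a = v a.
Proof.
case=> _ xig _ a; case: N'ex => chi'_inj _ _; case: Nex => _ _ psi_onto.
by have [b <-] := psi_onto a; apply: chi'_inj; exact: xig b.
Qed.

Lemma piM_ker (p : xmor N N') :
  ((forall a, mf p a = 0) /\ (forall c, mh p c = 0)) <->
  exists u (hu : zmod_morphism u), xmor_eq p (xi hu).
Proof.
split; last by case=> u [hu [pf _ ph]]; split=> x; [rewrite pf | rewrite ph].
case=> pf0 ph0; case: (Nex) => _ ker_psi psi_onto; case: (N'ex) => chi'_inj ker_psi' _.
have g_psi0 b : psibar b = 0 -> mg p b = 0.
  by case/ker_psi=> c <-; rewrite /chibar mgchi ph0 (zmod_morph0 (xchi_add N')).
have /choice[u uP] : forall a, exists c',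
    forall b, psibar b = a -> chibar N' c' = mg p b.
  move=> a; have [b0 <-] := psi_onto a.
  have /ker_psi'[c' gb0] : psibar (mg p b0) = 0.
    by apply: val_inj; rewrite /= -mfpsi pf0.
  exists c' => b /eqP; rewrite -subr_eq0 -(@psibar_add N) => /eqP /g_psi0.
  by rewrite (mg_add p) gb0 => /subr0_eq.
have hu : zmod_morphism u.
  move=> a1 a2; apply: chi'_inj.
  have [b1 <-] := psi_onto a1; have [b2 <-] := psi_onto a2.
  by rewrite -(@psibar_add N) (@chibar_add N') !(uP _ _ erefl) (mg_add p).
exists u, hu; split=> x //=; by [rewrite pf0 | rewrite /xi_g (uP _ x) | rewrite ph0].
Qed.

Lemma piMD (p p' : xmor N N') :
  emor_eq (piM (xadd p p')) (eadd (piM p) (piM p')).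
Proof. by []. Qed.

End XiSequence.

Lemma xi_natural (M N N' M' : xdiag) (p : xmor M N) (q : xmor N' M')
    (u : tors2 (alpha N) -> mod2 (gamma N')) (hu : zmod_morphism u) :
  xmor_eq (xcomp q (xcomp (xi hu) p))
          (xi (zmod_morphism_comp (mod2map_add (mh_add q))
                 (zmod_morphism_comp hu (tors2map_add (mf_add p))))).
Proof.
split=> x /=.
- exact: zmod_morph0 (mf_add q).
- rewrite /xi_g /chibar mgchi.
  have -> : psibar (mg p x) = tors2map (mf_add p) (psibar x).
    by apply: val_inj; rewrite /= mfpsi.
  by rewrite /= /mod2map -/(chibar M' _) chibar_pi.
- exact: zmod_morph0 (mh_add q).
Qed.

Lemma freeg_int_double_eq0 (K : choiceType) (x : {freeg K / int}) :
  x *+ 2 = 0 -> x = 0.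
Proof.
move=> x2; apply/eqP/freeg_eqP => k; have := congr1 (coeff k) x2.
by rewrite coeffMn coeff0 => /eqP; rewrite mulrn_eq0 => /eqP.
Qed.

Section Realization.
Variable D : ediag.
Local Notation A := (eA D).
Local Notation C := (eC D).
Local Notation eta := (eeta D).
Local Notation V := (tors2 A).
Local Notation F := {freeg V / int}.

Definition tors2_cover (x : F) : V := fglift (fun v : V => v : zmodule V) x.

Lemma tors2_cover_add : zmod_morphism tors2_cover.
Proof. exact: (lift_is_additive (fun v : V => v : zmodule V)). Qed.

Lemma tors2_coverU (v : V) : tors2_cover << v >> = v.
Proof. exact: (liftU (fun v : V => v : zmodule V) 1 v). Qed.

Definition double_graph (z : F * mod2 C) : Prop :=
  exists w, z = (w *+ 2, \pi_(mod2 C) (eta (tors2_cover w))).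

Lemma double_graph_lift :
  lift_graph (fun _ : F => 0 : mod2 C) (fun _ : mod2 C => 0) double_graph.
Proof.
split=> //.
- move=> x y y' [w [e ->]] [w' [e' ->]]; suff -> : w = w' by [].
  by apply/subr0_eq/freeg_int_double_eq0; rewrite mulrnBl -e -e' subrr.
- move=> _ _ [w ->] [w' ->]; exists (w - w').
  by rewrite mulrnBl tors2_cover_add (eeta_add D) mod2_piB.
Qed.

(* On [ker tors2_cover] the value forced at [2w] is [0], so [y = 0] is a half. *)
Lemma twist_exists : exists theta : F -> mod2 C,
  [/\ forall x y, tors2_cover x = 0 -> tors2_cover y = 0 ->
        theta (x - y) = theta x - theta y
    & forall w, theta (w *+ 2) = \pi_(mod2 C) (eta (tors2_cover w))].
Proof.
have halves x : tors2_cover x = 0 ->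
    exists y : mod2 C, 0 = 0 :> mod2 C /\ double_graph (x *+ 2, y *+ 2).
  move=> x0; exists 0; split=> //; exists x.
  by rewrite x0 (zmod_morph0 (eeta_add D)) mul0rn.
have [theta [thetaB thetaR _]] := lift_extension (@zmod_morphism_zero F (mod2 C))
  (@zmod_morphism_zero (mod2 C) (mod2 C)) double_graph_lift halves.
by exists theta; split=> // w; apply: thetaR; exists w.
Qed.

Section Twisted.
Import Quotient.
Variable theta : F -> mod2 C.
Hypothesis thetaB : forall x y, tors2_cover x = 0 -> tors2_cover y = 0 ->
  theta (x - y) = theta x - theta y.
Hypothesis theta_double :
  forall w, theta (w *+ 2) = \pi_(mod2 C) (eta (tors2_cover w)).

Lemma theta0 : theta 0 = 0.
Proof.
have c0 := zmod_morph0 tors2_cover_add.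
by have := thetaB c0 c0; rewrite subr0 subrr.
Qed.

Definition realization_rel : {pred C * F} :=
  fun z => `[< tors2_cover z.2 = 0 /\ \pi_(mod2 C) z.1 = theta z.2 >].

Lemma realization_relP z : reflect
  (tors2_cover z.2 = 0 /\ \pi_(mod2 C) z.1 = theta z.2) (z \in realization_rel).
Proof. exact: asboolP. Qed.

Fact realization_rel_zmod_closed : zmod_closed realization_rel.
Proof.
split=> [|x y /realization_relP[x0 xt] /realization_relP[y0 yt]].
  by apply/realization_relP; rewrite (zmod_morph0 tors2_cover_add) theta0.
apply/realization_relP; split; first by rewrite /= tors2_cover_add x0 y0 subrr.
by rewrite /= mod2_piB xt yt thetaB.
Qed.

HB.instance Definition _ := GRing.isZmodClosed.Build (C * F)%type
  realization_rel realization_rel_zmod_closed.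

Definition realB := quot realization_rel.

Lemma realB_piP z z' :
  \pi_realB z = \pi_realB z' <-> z - z' \in realization_rel.
Proof. by rewrite idealrBE; split=> /eqP. Qed.

Definition chiR (c : C) : realB := \pi_realB (c, 0).
Definition psiR (b : realB) : A := tors2_cover (repr b).2.

Lemma psiR_pi z : psiR (\pi_realB z) = tors2_cover z.2 :> A.
Proof.
have /realB_piP/realization_relP[e _] := reprK (\pi_realB z).
by rewrite /psiR; congr t2val; apply/subr0_eq; rewrite -tors2_cover_add.
Qed.

Lemma chiR_add : zmod_morphism chiR.
Proof.
move=> c c'; rewrite /chiR -raddfB; congr \pi_realB.
by apply: injective_projections; rewrite //= subr0.
Qed.

Lemma psiR_add : zmod_morphism psiR.
Proof.
move=> b b'; rewrite -[b]reprK -[b']reprK -raddfB !psiR_pi.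
by rewrite tors2_cover_add.
Qed.

Lemma psiR_chiR c : psiR (chiR c) = 0.
Proof. by rewrite psiR_pi (zmod_morph0 tors2_cover_add). Qed.

Lemma chiR_eta_psiR b : chiR (eta (psiR b)) = b *+ 2.
Proof.
rewrite -[b]reprK; case: (repr b) => c w; rewrite psiR_pi -raddfMn.
apply/realB_piP/realization_relP; split.
  rewrite -[(_ - _).2]/(0 - w *+ 2) sub0r (zmod_morphN tors2_cover_add).
  by rewrite (zmod_morphMn tors2_cover_add) tors2_double oppr0.
rewrite -[(_ - _).1]/(eta (tors2_cover w) - c *+ 2) -[(_ - _).2]/(0 - w *+ 2).
rewrite mod2_piB mod2_pi_double subr0 sub0r -mulNrn theta_double.
by rewrite (zmod_morphN tors2_cover_add) (zmod_morphN (eeta_add D)) mod2_piN.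
Qed.

Definition realization : xdiag :=
  XDiag (eeta_add D) chiR_add psiR_add (@eeta2 D) psiR_chiR chiR_eta_psiR.

Lemma realization_exact : xexact realization.
Proof.
split.
- move=> q1 q2 /realB_piP/realization_relP[_] /=.
  rewrite mod2_piB !reprK subr0 theta0 => /eqP; rewrite subr_eq0 => /eqP //.
- move=> b; split; last by case=> q <-; apply: val_inj; rewrite /= psiR_chiR.
  rewrite -[b]reprK; set z := repr b => /(congr1 val) /=; rewrite psiR_pi => z0.
  have {}z0 : tors2_cover z.2 = 0 by apply: val_inj.
  exists (\pi_(mod2 C) (z.1 - repr (theta z.2))).
  apply: etrans (chibar_pi (N := realization) _) _; apply/realB_piP/realization_relP.
  rewrite -[(_ - _).1]/(z.1 - repr (theta z.2) - z.1) -[(_ - _).2]/(0 - z.2).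
  rewrite tors2_cover_add z0 (zmod_morph0 tors2_cover_add) subrr; split=> //.
  rewrite (thetaB (zmod_morph0 tors2_cover_add) z0) theta0.
  by rewrite addrAC subrr !sub0r mod2_piN reprK mod2N.
- move=> a; exists (\pi_realB (0, << a >>)); apply: val_inj.
  by rewrite /= psiR_pi tors2_coverU.
Qed.

End Twisted.

Lemma piD_ess_surj : exists N : xdiag, xexact N /\ exists p : emor (piD N) D, eiso p.
Proof.
have [theta [thetaB theta_double]] := twist_exists.
pose N := realization thetaB theta_double.
exists N; split; first exact: realization_exact.
exists (@EMor (piD N) D id id (@zmod_morphism_id _) (@zmod_morphism_id _) (fun _ => erefl)).
exists (@EMor D (piD N) id id (@zmod_morphism_id _) (@zmod_morphism_id _) (fun _ => erefl)).
by split; split.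
Qed.

End Realization.

Theorem proposition3p7 :
  (forall D : ediag,
     exists N : xdiag, xexact N /\ exists p : emor (piD N) D, eiso p)
  /\
  (forall N N' : xdiag, xexact N -> xexact N' ->
     forall p : xmor N N', eiso (piM p) -> xiso p)
  /\
  (forall N N' : xdiag, xexact N -> xexact N' ->
     [/\ forall (u v : tors2 (alpha N) -> mod2 (gamma N'))
                (hu : zmod_morphism u) (hv : zmod_morphism v),
           xmor_eq (xi (zmod_morphism_add hu hv)) (xadd (xi hu) (xi hv)),
         forall (u v : tors2 (alpha N) -> mod2 (gamma N'))
                (hu : zmod_morphism u) (hv : zmod_morphism v),
           xmor_eq (xi hu) (xi hv) -> forall a, u a = v a,
         forall p : xmor N N',
           ((forall a, mf p a = 0) /\ (forall c, mh p c = 0)) <->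
           exists (u : tors2 (alpha N) -> mod2 (gamma N'))
                  (hu : zmod_morphism u), xmor_eq p (xi hu),
         forall q : emor (piD N) (piD N'),
           exists p : xmor N N', emor_eq (piM p) q
       & forall p q : xmor N N',
           emor_eq (piM (xadd p q)) (eadd (piM p) (piM q))])
  /\
  (forall M N N' M' : xdiag,
     xexact M -> xexact N -> xexact N' -> xexact M' ->
     forall (p : xmor M N) (q : xmor N' M')
            (u : tors2 (alpha N) -> mod2 (gamma N')) (hu : zmod_morphism u),
       xmor_eq (xcomp q (xcomp (xi hu) p))
               (xi (zmod_morphism_comp (mod2map_add (mh_add q))
                      (zmod_morphism_comp hu (tors2map_add (mf_add p)))))).
Proof.
split; first exact: piD_ess_surj.
split; first exact: piM_reflect_iso.
split=> [N N' Nex N'ex | M N N' M' _ _ _ _]; last exact: xi_natural.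
split.
- exact: xiD.
- exact: xi_inj.
- exact: piM_ker.
- exact: piM_full.
- exact: piMD.
Qed.
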